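(* Let $X$ be a complex Banach space with open unit ball $B$, and let $Y$ be a closed subspace of $X$ of finite codimension with open unit ball $B_Y$. Then for every $f\in A_u(B)$, $Cl_B(f,0)=Cl_{B_Y}(f|_{B_Y},0)$.
   Context: $A_u(B)$ is the algebra of bounded holomorphic functions on $B$ that are uniformly continuous on $B$. For a Banach space $Z$ with open unit ball $B_Z$ and a function $g$ on $B_Z$, $Cl_{B_Z}(g,0)$ is the set of all $\lambda\in\mathbb C$ such that $\lambda=\lim_\alpha g(z_\alpha)$ for some net $(z_\alpha)$ in $B_Z$ converging weakly to $0$ (equivalently weak-star to $0$ in $Z^{**}$). *)

From Stdlib Require Import Reals Lra.
Open Scope R_scope.

Record Cplx : Type := mkC { Re : R; Im : R }.
Definition C0 : Cplx := mkC 0 0.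
Definition C1 : Cplx := mkC 1 0.
Definition Cadd (a b : Cplx) : Cplx := mkC (Re a + Re b) (Im a + Im b).
Definition Copp (a : Cplx) : Cplx := mkC (- Re a) (- Im a).
Definition Csub (a b : Cplx) : Cplx := Cadd a (Copp b).
Definition Cmul (a b : Cplx) : Cplx :=
  mkC (Re a * Re b - Im a * Im b) (Re a * Im b + Im a * Re b).
Definition Cmod (a : Cplx) : R := sqrt (Re a * Re a + Im a * Im a).

Record CBanach : Type := {
  vec :> Type;
  vzero : vec;
  vadd : vec -> vec -> vec;
  vopp : vec -> vec;
  vscal : Cplx -> vec -> vec;
  vnorm : vec -> R;
  vadd_assoc : forall x y z, vadd x (vadd y z) = vadd (vadd x y) z;
  vadd_comm : forall x y, vadd x y = vadd y x;
  vadd_0 : forall x, vadd x vzero = x;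
  vadd_opp : forall x, vadd x (vopp x) = vzero;
  vscal_1 : forall x, vscal C1 x = x;
  vscal_assoc : forall a b x, vscal a (vscal b x) = vscal (Cmul a b) x;
  vscal_distr_v : forall a x y, vscal a (vadd x y) = vadd (vscal a x) (vscal a y);
  vscal_distr_c : forall a b x, vscal (Cadd a b) x = vadd (vscal a x) (vscal b x);
  vnorm_scal : forall a x, vnorm (vscal a x) = Cmod a * vnorm x;
  vnorm_triangle : forall x y, vnorm (vadd x y) <= vnorm x + vnorm y;
  vnorm_eq0 : forall x, vnorm x = 0 -> x = vzero;
  vcomplete : forall u : nat -> vec,
    (forall eps, eps > 0 -> exists N, forall n m, (n >= N)%nat -> (m >= N)%nat ->
        vnorm (vadd (u n) (vopp (u m))) < eps) ->
    exists l, forall eps, eps > 0 -> exists N, forall n, (n >= N)%nat ->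
        vnorm (vadd (u n) (vopp l)) < eps
}.

Arguments vzero {_}.
Arguments vadd {_}.
Arguments vopp {_}.
Arguments vscal {_}.
Arguments vnorm {_}.

Definition vsub {X : CBanach} (x y : X) : X := vadd x (vopp y).

Definition ball1 {X : CBanach} (x : X) : Prop := vnorm x < 1.

Definition is_subspace {X : CBanach} (Y : X -> Prop) : Prop :=
  Y vzero /\ (forall x y, Y x -> Y y -> Y (vadd x y)) /\
  (forall a x, Y x -> Y (vscal a x)).

Definition is_closed {X : CBanach} (Y : X -> Prop) : Prop :=
  forall (u : nat -> X) (l : X), (forall n, Y (u n)) ->
    (forall eps, eps > 0 -> exists N, forall n, (n >= N)%nat -> vnorm (vsub (u n) l) < eps) ->
    Y l.

(* finite codimension: the quotient X/Y is finite dimensional, i.e. spanned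
   by the classes of finitely many vectors e_0, ..., e_{n-1}. *)
Fixpoint lincomb {X : CBanach} (n : nat) (c : nat -> Cplx) (e : nat -> X) : X :=
  match n with
  | O => vzero
  | S k => vadd (lincomb k c e) (vscal (c k) (e k))
  end.

Definition finite_codim {X : CBanach} (Y : X -> Prop) : Prop :=
  exists (n : nat) (e : nat -> X), forall x : X,
    exists (c : nat -> Cplx) (y : X), Y y /\ x = vadd y (lincomb n c e).

Definition is_Clinear {X : CBanach} (L : X -> Cplx) : Prop :=
  (forall x y, L (vadd x y) = Cadd (L x) (L y)) /\
  (forall a x, L (vscal a x) = Cmul a (L x)).

Definition holomorphic_on_ball {X : CBanach} (f : X -> Cplx) : Prop :=
  forall x : X, ball1 x ->
    exists L : X -> Cplx, is_Clinear L /\ (exists M, forall h, Cmod (L h) <= M * vnorm h) /\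
      forall eps, eps > 0 -> exists delta, delta > 0 /\
        forall h : X, vnorm h < delta ->
          Cmod (Csub (Csub (f (vadd x h)) (f x)) (L h)) <= eps * vnorm h.

Definition bounded_on_ball {X : CBanach} (f : X -> Cplx) : Prop :=
  exists M, forall x : X, ball1 x -> Cmod (f x) <= M.

Definition unif_cont_on_ball {X : CBanach} (f : X -> Cplx) : Prop :=
  forall eps, eps > 0 -> exists delta, delta > 0 /\
    forall x y : X, ball1 x -> ball1 y -> vnorm (vsub x y) < delta ->
      Cmod (Csub (f x) (f y)) < eps.

Definition A_u {X : CBanach} (f : X -> Cplx) : Prop :=
  holomorphic_on_ball f /\ bounded_on_ball f /\ unif_cont_on_ball f.

Definition directed {I : Type} (le : I -> I -> Prop) : Prop :=
  (exists i : I, True) /\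
  (forall i, le i i) /\ (forall i j k, le i j -> le j k -> le i k) /\
  (forall i j, exists k, le i k /\ le j k).

(* continuous (= bounded) Cplx-linear functionals on the normed subspace Z of X
   (Z = the whole space gives the dual X* ) *)
Definition dual_functional {X : CBanach} (Z : X -> Prop) (phi : X -> Cplx) : Prop :=
  (forall x y, Z x -> Z y -> phi (vadd x y) = Cadd (phi x) (phi y)) /\
  (forall a x, Z x -> phi (vscal a x) = Cmul a (phi x)) /\
  (exists M, forall x, Z x -> Cmod (phi x) <= M * vnorm x).

Definition net_lim_C {I : Type} (le : I -> I -> Prop) (w : I -> Cplx) (l : Cplx) : Prop :=
  forall eps, eps > 0 -> exists i0, forall i, le i0 i -> Cmod (Csub (w i) l) < eps.

(* weak convergence to 0 in the normed space Z (a subspace of X, with the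
   induced norm): tested against the functionals of Z* *)
Definition weak_to_0 {X : CBanach} (Z : X -> Prop) {I : Type}
    (le : I -> I -> Prop) (z : I -> X) : Prop :=
  forall phi, dual_functional Z phi -> net_lim_C le (fun i => phi (z i)) C0.

Definition cluster_set0 {X : CBanach} (Z : X -> Prop) (g : X -> Cplx) : Cplx -> Prop :=
  fun lam => exists (I : Type) (le : I -> I -> Prop) (z : I -> X),
    directed le /\ (forall i, Z (z i) /\ ball1 (z i)) /\
    weak_to_0 Z le z /\ net_lim_C le (fun i => g (z i)) lam.

(* Cl_{B_Y}(f,0) is contained in Cl_B(f,0) because a net that is weakly null in Y
   is weakly null in X (every functional on X restricts to Y).  For the converse
   we add the missing directions one at a time.  If e lies at positive distance
   from Y, the space W = Y + Ce is again closed, and on W the coordinate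
   y + c e |-> c and the projection y + c e |-> y are bounded.  Given a weakly
   null net z_i = y_i + c_i e in B_W, the coordinates c_i tend to 0, so the
   points y_i / (1 + |c_i| ||e||) lie in B_Y, form a weakly null net of Y and
   are uniformly close to z_i; hence they produce the same cluster values, i.e.
   Cl_{B_W}(f,0) is contained in Cl_{B_Y}(f,0).  An induction on the number of
   vectors spanning X modulo Y, starting from W = X, concludes. *)
From Pilot Require Import Defs.
From Stdlib Require Import Reals Lra Psatz ClassicalEpsilon Classical.
Open Scope R_scope.

Lemma Ceq (a b : Cplx) : Re a = Re b -> Im a = Im b -> a = b.
Proof. destruct a, b; simpl; intros; subst; reflexivity. Qed.

Lemma Cmod_ge0 (a : Cplx) : 0 <= Cmod a.
Proof. unfold Cmod; apply sqrt_pos. Qed.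

Lemma sqrt_sq_le (x y : R) : 0 <= y -> x * x <= y -> x <= sqrt y.
Proof.
  intros Hy H. destruct (Rle_or_lt x 0). { pose proof (sqrt_pos y); lra. }
  rewrite <- (sqrt_square x) by lra. apply sqrt_le_1_alt; lra.
Qed.

Lemma Cmod_triangle (a b : Cplx) : Cmod (Cadd a b) <= Cmod a + Cmod b.
Proof.
  unfold Cmod, Cadd; destruct a as [p q], b as [r s]; simpl.
  set (A := p*p+q*q). set (B := r*r+s*s).
  assert (HA : 0 <= A) by (unfold A; nra). assert (HB : 0 <= B) by (unfold B; nra).
  pose proof (sqrt_pos A). pose proof (sqrt_pos B).
  (* Cauchy-Schwarz in R^2 *)
  assert (Hcs : p*r+q*s <= sqrt A * sqrt B).
  { rewrite <- sqrt_mult_alt by lra. apply sqrt_sq_le.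
    - apply Rmult_le_pos; lra.
    - unfold A, B. assert (0 <= (p*s-q*r)*(p*s-q*r)) by apply Rle_0_sqr. nra. }
  rewrite <- (sqrt_square (sqrt A + sqrt B)) by lra. apply sqrt_le_1_alt.
  assert (sqrt A * sqrt A = A) by (apply sqrt_sqrt; lra).
  assert (sqrt B * sqrt B = B) by (apply sqrt_sqrt; lra).
  unfold A, B in *. nra.
Qed.

Lemma Cmod_mul (a b : Cplx) : Cmod (Cmul a b) = Cmod a * Cmod b.
Proof. unfold Cmod, Cmul; simpl. rewrite <- sqrt_mult_alt by nra. f_equal. ring. Qed.

Lemma Cmod_real (s : R) : Cmod (mkC s 0) = Rabs s.
Proof. unfold Cmod; simpl. rewrite <- sqrt_Rsqr_abs. f_equal. unfold Rsqr; ring. Qed.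

Lemma Cmod_C0 : Cmod C0 = 0.
Proof. unfold Cmod; simpl. replace (0*0+0*0) with 0 by ring. apply sqrt_0. Qed.

Lemma Cmod_eq0 (a : Cplx) : Cmod a = 0 -> a = C0.
Proof. unfold Cmod; intro H. apply sqrt_eq_0 in H; [|nra]. apply Ceq; simpl; nra. Qed.

Lemma Csub_C0 (a : Cplx) : Csub a C0 = a.
Proof. apply Ceq; unfold Csub, Cadd, Copp; simpl; ring. Qed.

Lemma Csub_eq0 (a b : Cplx) : Csub a b = C0 -> a = b.
Proof.
  intro H. assert (Re (Csub a b) = 0 /\ Im (Csub a b) = 0) as [H1 H2] by (rewrite H; simpl; auto).
  unfold Csub, Cadd, Copp in *; simpl in *. apply Ceq; lra.
Qed.

Lemma Csub_split (a b m : Cplx) : Csub a b = Cadd (Csub a m) (Csub m b).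
Proof. apply Ceq; unfold Csub, Cadd, Copp; simpl; ring. Qed.

Lemma Re_le (a : Cplx) : Rabs (Re a) <= Cmod a.
Proof. unfold Cmod. rewrite <- sqrt_Rsqr_abs. apply sqrt_le_1_alt. unfold Rsqr; nra. Qed.

Lemma Im_le (a : Cplx) : Rabs (Im a) <= Cmod a.
Proof. unfold Cmod. rewrite <- sqrt_Rsqr_abs. apply sqrt_le_1_alt. unfold Rsqr; nra. Qed.

Lemma Cmod_le_ReIm (a : Cplx) : Cmod a <= Rabs (Re a) + Rabs (Im a).
Proof.
  pose proof (Rabs_pos (Re a)); pose proof (Rabs_pos (Im a)).
  unfold Cmod. rewrite <- (sqrt_square (Rabs (Re a) + Rabs (Im a))) by lra.
  apply sqrt_le_1_alt.
  pose proof (Rsqr_abs (Re a)); pose proof (Rsqr_abs (Im a)). unfold Rsqr in *. nra.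
Qed.

Definition Cinv (c : Cplx) : Cplx :=
  mkC (Re c / (Re c * Re c + Im c * Im c)) (- Im c / (Re c * Re c + Im c * Im c)).

Lemma Cmul_inv (c : Cplx) : c <> C0 -> Cmul c (Cinv c) = Defs.C1.
Proof.
  intro H. destruct c as [p q].
  assert (p*p+q*q <> 0) by (intro E; apply H; apply Ceq; simpl; nra).
  apply Ceq; unfold Cmul, Cinv; simpl; field; auto.
Qed.

(* C is complete: real and imaginary parts of a Cauchy sequence converge. *)
Lemma Cplx_complete (c : nat -> Cplx) :
  (forall eps, eps > 0 -> exists N, forall n m, (n >= N)%nat -> (m >= N)%nat ->
     Cmod (Csub (c n) (c m)) < eps) ->
  exists c0, forall eps, eps > 0 -> exists N, forall n, (n >= N)%nat ->
     Cmod (Csub (c n) c0) < eps.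
Proof.
  intro Hc.
  assert (HRe : Cauchy_crit (fun n => Re (c n))).
  { intros eps He. destruct (Hc eps He) as (N & HN). exists N. intros n m Hn Hm.
    exact (Rle_lt_trans _ _ _ (Re_le _) (HN n m Hn Hm)). }
  assert (HIm : Cauchy_crit (fun n => Im (c n))).
  { intros eps He. destruct (Hc eps He) as (N & HN). exists N. intros n m Hn Hm.
    exact (Rle_lt_trans _ _ _ (Im_le _) (HN n m Hn Hm)). }
  destruct (R_complete _ HRe) as (lr & Hlr). destruct (R_complete _ HIm) as (li & Hli).
  exists (mkC lr li). intros eps He.
  destruct (Hlr (eps / 2)) as (N1 & H1); [lra|].
  destruct (Hli (eps / 2)) as (N2 & H2); [lra|].
  exists (N1 + N2)%nat. intros n Hn.
  specialize (H1 n ltac:(lia)). specialize (H2 n ltac:(lia)). unfold R_dist in *.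
  eapply Rle_lt_trans; [apply Cmod_le_ReIm|]. simpl. unfold Rminus in *. lra.
Qed.

Arguments vadd_assoc {_}. Arguments vadd_comm {_}. Arguments vadd_0 {_}.
Arguments vadd_opp {_}. Arguments vscal_1 {_}. Arguments vscal_assoc {_}.
Arguments vscal_distr_v {_}. Arguments vscal_distr_c {_}. Arguments vnorm_scal {_}.
Arguments vnorm_triangle {_}.

Section VectorAlgebra.
Context {X : CBanach}.

Lemma vadd_0l (x : X) : vadd vzero x = x.
Proof. rewrite vadd_comm; apply vadd_0. Qed.

Lemma vadd_cancel (a b c : X) : vadd a b = vadd a c -> b = c.
Proof.
  intro H. rewrite <- (vadd_0l b), <- (vadd_0l c), <- (vadd_opp a), (vadd_comm a).
  rewrite <- !vadd_assoc, H. reflexivity.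
Qed.

Lemma vscal_C0 (x : X) : vscal C0 x = vzero.
Proof.
  apply (vadd_cancel (vscal C0 x)). rewrite vadd_0, <- vscal_distr_c.
  f_equal. apply Ceq; simpl; ring.
Qed.

Lemma vopp_unique (x y : X) : vadd x y = vzero -> y = vopp x.
Proof. intro H. apply (vadd_cancel x). rewrite H, vadd_opp; reflexivity. Qed.

Lemma vopp_scal (x : X) : vopp x = vscal (mkC (-1) 0) x.
Proof.
  symmetry. apply vopp_unique. rewrite <- (vscal_1 x) at 1.
  rewrite <- vscal_distr_c, <- (vscal_C0 x). f_equal. apply Ceq; simpl; ring.
Qed.

Lemma vopp_add (x y : X) : vopp (vadd x y) = vadd (vopp x) (vopp y).
Proof. rewrite !vopp_scal. apply vscal_distr_v. Qed.

Lemma vopp_opp (x : X) : vopp (vopp x) = x.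
Proof. symmetry. apply vopp_unique. rewrite vadd_comm. apply vadd_opp. Qed.

Lemma vadd_oppK (x y : X) : vadd (vadd x y) (vopp y) = x.
Proof. rewrite <- vadd_assoc, vadd_opp, vadd_0. reflexivity. Qed.

Lemma vsub_addK (a b : X) : vadd (vsub a b) b = a.
Proof. unfold vsub. rewrite <- vadd_assoc, (vadd_comm (vopp b)), vadd_opp, vadd_0. reflexivity. Qed.

Lemma vsub_diag (x : X) : vsub x x = vzero.
Proof. apply vadd_opp. Qed.

Lemma vadd_4 (a b c d : X) : vadd (vadd a b) (vadd c d) = vadd (vadd a c) (vadd b d).
Proof. rewrite <- !vadd_assoc. f_equal. rewrite !vadd_assoc. f_equal. apply vadd_comm. Qed.

Lemma vsub_chain (a b c : X) : vadd (vsub a b) (vsub b c) = vsub a c.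
Proof.
  unfold vsub. rewrite <- vadd_assoc. f_equal.
  rewrite vadd_assoc, (vadd_comm (vopp b)), vadd_opp, vadd_0l. reflexivity.
Qed.

Lemma vscal_sub (c c' : Cplx) (x : X) : vscal (Csub c c') x = vsub (vscal c x) (vscal c' x).
Proof.
  unfold Csub, vsub. rewrite vscal_distr_c, vopp_scal, vscal_assoc. do 2 f_equal.
  apply Ceq; simpl; ring.
Qed.

Lemma vsub_add (a b a' b' : X) : vsub (vadd a b) (vadd a' b') = vadd (vsub a a') (vsub b b').
Proof. unfold vsub. rewrite vopp_add, vadd_4. reflexivity. Qed.

Lemma vsub_decomp (y y' : X) (c c' : Cplx) (e : X) :
  vsub (vadd y (vscal c e)) (vadd y' (vscal c' e)) = vadd (vsub y y') (vscal (Csub c c') e).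
Proof. rewrite vsub_add, vscal_sub. reflexivity. Qed.

Lemma vnorm_0 : vnorm (@vzero X) = 0.
Proof. rewrite <- (vscal_C0 vzero), vnorm_scal, Cmod_C0. ring. Qed.

Lemma vnorm_opp (x : X) : vnorm (vopp x) = vnorm x.
Proof.
  rewrite vopp_scal, vnorm_scal, Cmod_real, Rabs_left by lra. ring.
Qed.

Lemma vnorm_ge0 (x : X) : 0 <= vnorm x.
Proof.
  pose proof (vnorm_triangle x (vopp x)). rewrite vadd_opp, vnorm_0, vnorm_opp in H. lra.
Qed.

Lemma vnorm_sub_sym (x y : X) : vnorm (vsub x y) = vnorm (vsub y x).
Proof. unfold vsub. rewrite <- vnorm_opp, vopp_add, vopp_opp, vadd_comm. reflexivity. Qed.

Lemma vnorm_sub_le (x y : X) : vnorm (vsub x y) <= vnorm x + vnorm y.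
Proof. rewrite <- (vnorm_opp y). apply vnorm_triangle. Qed.

Lemma subspace_opp (Y : X -> Prop) : is_subspace Y -> forall x, Y x -> Y (vopp x).
Proof. intros (_ & _ & Hs) x Hx. rewrite vopp_scal. auto. Qed.

Lemma subspace_sub (Y : X -> Prop) : is_subspace Y ->
  forall x y, Y x -> Y y -> Y (vsub x y).
Proof. intros HY x y Hx Hy. pose proof HY as (_ & Ha & _). apply Ha, subspace_opp; auto. Qed.

End VectorAlgebra.

Lemma directed_upper {I : Type} (le : I -> I -> Prop) : directed le ->
  forall i j, exists k, forall l, le k l -> le i l /\ le j l.
Proof.
  intros (_ & _ & Htr & Hub) i j. destruct (Hub i j) as (k & Hik & Hjk).
  exists k; intros l Hl; split; eapply Htr; eauto.
Qed.

Lemma net_lim_C0_dominated {I : Type} (le : I -> I -> Prop) (a b : I -> Cplx) :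
  net_lim_C le a C0 -> (forall i, Cmod (b i) <= Cmod (a i)) -> net_lim_C le b C0.
Proof.
  intros Ha Hab eps Heps. destruct (Ha eps Heps) as (i0 & Hi0). exists i0.
  intros i Hi. specialize (Hi0 i Hi). rewrite Csub_C0 in *. specialize (Hab i). lra.
Qed.

Lemma net_lim_C_perturb {I : Type} (le : I -> I -> Prop) (a b : I -> Cplx) (lam : Cplx) :
  directed le -> net_lim_C le a lam -> net_lim_C le (fun i => Csub (b i) (a i)) C0 ->
  net_lim_C le b lam.
Proof.
  intros Hdir Ha Hba eps Heps.
  destruct (Ha (eps / 2)) as (i1 & H1); [lra|].
  destruct (Hba (eps / 2)) as (i2 & H2); [lra|].
  destruct (directed_upper le Hdir i1 i2) as (k & Hk). exists k. intros i Hi.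
  destruct (Hk i Hi) as [L1 L2]. specialize (H1 i L1). specialize (H2 i L2).
  rewrite Csub_C0 in H2. rewrite (Csub_split _ _ (a i)).
  eapply Rle_lt_trans; [apply Cmod_triangle|]. lra.
Qed.

(* Cl_{B_Z}(f,0) grows with Z: functionals on the larger space restrict to
   functionals on the smaller one. *)
Lemma cluster_set0_mono {X : CBanach} (Z Z' : X -> Prop) (f : X -> Cplx) (lam : Cplx) :
  (forall x, Z x -> Z' x) -> cluster_set0 Z f lam -> cluster_set0 Z' f lam.
Proof.
  intros HZ (I & le & z & Hdir & Hz & Hw & Hl).
  exists I, le, z. split; [exact Hdir|]. split.
  - intro i; destruct (Hz i); split; auto.
  - split; [|exact Hl]. intros phi (Ha & Hs & M & HM). apply Hw.
    split; [|split]; auto. exists M; auto.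
Qed.

(** The space Y + Ce and its coordinates *)

Definition ext_line {X : CBanach} (Y : X -> Prop) (e : X) : X -> Prop :=
  fun x => exists c y, Y y /\ x = vadd y (vscal c e).

Lemma decomp_exists {X : CBanach} (Y : X -> Prop) (e x : X) :
  exists p : Cplx * X, ext_line Y e x -> Y (snd p) /\ x = vadd (snd p) (vscal (fst p) e).
Proof.
  destruct (classic (ext_line Y e x)) as [(c & y & Hy & E)|N].
  - exists (c, y); simpl; auto.
  - exists (C0, x); intro H; contradiction.
Qed.

Definition decomp {X : CBanach} (Y : X -> Prop) (e x : X) : Cplx * X :=
  proj1_sig (constructive_indefinite_description _ (decomp_exists Y e x)).
Definition coef {X : CBanach} (Y : X -> Prop) (e x : X) : Cplx := fst (decomp Y e x).
Definition base {X : CBanach} (Y : X -> Prop) (e x : X) : X := snd (decomp Y e x).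

Lemma decomp_spec {X : CBanach} (Y : X -> Prop) (e x : X) : ext_line Y e x ->
  Y (base Y e x) /\ x = vadd (base Y e x) (vscal (coef Y e x) e).
Proof.
  unfold base, coef, decomp. destruct (constructive_indefinite_description _ _); simpl; auto.
Qed.

Lemma ext_line_subspace {X : CBanach} (Y : X -> Prop) (e : X) :
  is_subspace Y -> is_subspace (ext_line Y e).
Proof.
  intros (H0 & Ha & Hs). split; [|split].
  - exists C0, vzero. split; auto. rewrite vscal_C0, vadd_0. reflexivity.
  - intros x x' (c & y & Hy & ->) (c' & y' & Hy' & ->).
    exists (Cadd c c'), (vadd y y'). split; auto. rewrite vadd_4, vscal_distr_c. reflexivity.
  - intros a x (c & y & Hy & ->). exists (Cmul a c), (vscal a y). split; auto.
    rewrite vscal_distr_v, vscal_assoc. reflexivity.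
Qed.

Lemma base_bound {X : CBanach} (Y : X -> Prop) (e x : X) : ext_line Y e x ->
  vnorm (base Y e x) <= vnorm x + Cmod (coef Y e x) * vnorm e.
Proof.
  intro Hx. destruct (decomp_spec Y e x Hx) as [_ Ex].
  rewrite <- (vnorm_scal (coef Y e x) e).
  replace (base Y e x) with (vsub x (vscal (coef Y e x) e)) by (rewrite Ex at 1; apply vadd_oppK).
  apply vnorm_sub_le.
Qed.

(* e is at distance >= d from Y, in the form controlling the coordinate of e. *)
Definition separated {X : CBanach} (Y : X -> Prop) (e : X) (d : R) : Prop :=
  forall y c, Y y -> Cmod c * d <= vnorm (vadd y (vscal c e)).

Section Separated.
Context {X : CBanach} (Y : X -> Prop) (e : X) (d : R).
Hypotheses (HY : is_subspace Y) (Hd : d > 0) (Hsep : separated Y e d).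

Lemma decomp_unique (y y' : X) (c c' : Cplx) : Y y -> Y y' ->
  vadd y (vscal c e) = vadd y' (vscal c' e) -> c = c' /\ y = y'.
Proof.
  intros Hy Hy' E.
  assert (Hzero : vadd (vsub y y') (vscal (Csub c c') e) = vzero).
  { rewrite <- vsub_decomp, E. apply vadd_opp. }
  pose proof (Hsep _ (Csub c c') (subspace_sub Y HY y y' Hy Hy')) as Hb.
  rewrite Hzero, vnorm_0 in Hb. pose proof (Cmod_ge0 (Csub c c')).
  assert (c = c') as <- by (apply Csub_eq0, Cmod_eq0; nra).
  split; auto. rewrite (vadd_comm y), (vadd_comm y') in E. exact (vadd_cancel _ _ _ E).
Qed.

Lemma decomp_eq (y : X) (c : Cplx) : Y y -> decomp Y e (vadd y (vscal c e)) = (c, y).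
Proof.
  intro Hy. destruct (decomp_spec Y e (vadd y (vscal c e))) as [H1 H2]; [exists c, y; auto|].
  unfold base, coef in *. destruct (decomp Y e (vadd y (vscal c e))) as [c' y']; simpl in *.
  destruct (decomp_unique y y' c c' Hy H1 H2); subst; auto.
Qed.

Lemma coef_eq (y : X) (c : Cplx) : Y y -> coef Y e (vadd y (vscal c e)) = c.
Proof. intro Hy. unfold coef. rewrite decomp_eq by exact Hy. reflexivity. Qed.

Lemma base_eq (y : X) (c : Cplx) : Y y -> base Y e (vadd y (vscal c e)) = y.
Proof. intro Hy. unfold base. rewrite decomp_eq by exact Hy. reflexivity. Qed.

Lemma coef_lipschitz (x x' : X) : ext_line Y e x -> ext_line Y e x' ->
  Cmod (Csub (coef Y e x) (coef Y e x')) * d <= vnorm (vsub x x').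
Proof.
  intros (c & y & Hy & ->) (c' & y' & Hy' & ->).
  rewrite !coef_eq, vsub_decomp by assumption.
  apply Hsep, subspace_sub; assumption.
Qed.

Lemma coef_dual : dual_functional (ext_line Y e) (coef Y e).
Proof.
  pose proof HY as (_ & Ha & Hs). split; [|split].
  - intros x x' (c & y & Hy & ->) (c' & y' & Hy' & ->).
    rewrite vadd_4, <- vscal_distr_c, !coef_eq; auto.
  - intros a x (c & y & Hy & ->).
    rewrite vscal_distr_v, vscal_assoc, !coef_eq; auto.
  - exists (/ d). intros x (c & y & Hy & ->). rewrite coef_eq by exact Hy.
    pose proof (Hsep y c Hy).
    replace (Cmod c) with (/ d * (Cmod c * d)) by (field; lra).
    apply Rmult_le_compat_l; [left; apply Rinv_0_lt_compat|]; lra.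
Qed.

Lemma base_dual (phi : X -> Cplx) : dual_functional Y phi ->
  dual_functional (ext_line Y e) (fun x => phi (base Y e x)).
Proof.
  intros (Pa & Ps & M & HM). pose proof HY as (_ & Ha & Hs). split; [|split].
  - intros x x' (c & y & Hy & ->) (c' & y' & Hy' & ->).
    rewrite vadd_4, <- vscal_distr_c, !base_eq; auto.
  - intros a x (c & y & Hy & ->).
    rewrite vscal_distr_v, vscal_assoc, !base_eq; auto.
  - exists (Rmax M 0 * (1 + vnorm e / d)). intros x (c & y & Hy & ->).
    assert (Hx : ext_line Y e (vadd y (vscal c e))) by (exists c, y; auto).
    pose proof (base_bound Y e _ Hx) as Hb. rewrite base_eq, coef_eq in Hb by exact Hy.
    rewrite base_eq by exact Hy.
    pose proof (Hsep y c Hy) as Hc. pose proof (HM y Hy).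
    set (n := vnorm (vadd y (vscal c e))) in *.
    assert (Hce : Cmod c * vnorm e <= n * (vnorm e / d)).
    { replace (n * (vnorm e / d)) with (n / d * vnorm e) by (field; lra).
      apply Rmult_le_compat_r; [apply vnorm_ge0|].
      apply Rmult_le_reg_r with d; [lra|].
      unfold Rdiv; rewrite Rmult_assoc, Rinv_l by lra; lra. }
    pose proof (vnorm_ge0 y). pose proof (Rmax_l M 0). pose proof (Rmax_r M 0).
    assert (M * vnorm y <= Rmax M 0 * vnorm y) by (apply Rmult_le_compat_r; auto).
    assert (Rmax M 0 * vnorm y <= Rmax M 0 * (n + n * (vnorm e / d)))
      by (apply Rmult_le_compat_l; lra).
    nra.
Qed.

(* Y + Ce is closed: the coordinates of a convergent sequence form a Cauchy
   sequence in C, and the Y-components then converge in the closed space Y. *)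
Lemma ext_line_closed : is_closed Y -> is_closed (ext_line Y e).
Proof.
  intros HYc u l Hu Hl.
  set (c := fun n => coef Y e (u n)).
  assert (Hcauchy : forall eps, eps > 0 -> exists N, forall n m, (n >= N)%nat -> (m >= N)%nat ->
            Cmod (Csub (c n) (c m)) < eps).
  { intros eps He. destruct (Hl (eps * d / 2)) as (N & HN).
    { apply Rdiv_lt_0_compat; [apply Rmult_lt_0_compat|]; lra. }
    exists N. intros n m Hn Hm. pose proof (HN n Hn). pose proof (HN m Hm).
    pose proof (coef_lipschitz (u n) (u m) (Hu n) (Hu m)) as Hc.
    pose proof (vnorm_triangle (vsub (u n) l) (vsub l (u m))) as Ht.
    rewrite vsub_chain, (vnorm_sub_sym l) in Ht.
    apply (Rmult_lt_reg_r d); [lra|]. unfold c. lra. }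
  destruct (Cplx_complete c Hcauchy) as (c0 & Hc0).
  set (L := vsub l (vscal c0 e)).
  exists c0, L. split; [|unfold L; symmetry; apply vsub_addK].
  apply (HYc (fun n => base Y e (u n))); [intro n; apply decomp_spec, Hu|].
  intros eps He. pose proof (vnorm_ge0 e).
  destruct (Hl (eps / 2)) as (N1 & H1); [lra|].
  destruct (Hc0 (eps / (2 * (vnorm e + 1)))) as (N2 & H2); [apply Rdiv_lt_0_compat; lra|].
  exists (N1 + N2)%nat. intros n Hn.
  specialize (H1 n ltac:(lia)). specialize (H2 n ltac:(lia)).
  destruct (decomp_spec Y e (u n) (Hu n)) as [_ Eu]. fold (c n) in Eu.
  assert (E : vsub (u n) l = vadd (vsub (base Y e (u n)) L) (vscal (Csub (c n) c0) e)).
  { assert (El : l = vadd L (vscal c0 e)) by (unfold L; symmetry; apply vsub_addK).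
    rewrite Eu, El at 1. apply vsub_decomp. }
  replace (vsub (base Y e (u n)) L) with (vsub (vsub (u n) l) (vscal (Csub (c n) c0) e))
    by (rewrite E; apply vadd_oppK).
  eapply Rle_lt_trans; [apply vnorm_sub_le|]. rewrite vnorm_scal.
  assert (Cmod (Csub (c n) c0) * vnorm e <= eps / 2).
  { apply Rle_trans with (eps / (2 * (vnorm e + 1)) * (vnorm e + 1)).
    - pose proof (Cmod_ge0 (Csub (c n) c0)). nra.
    - right. field. lra. }
  lra.
Qed.

End Separated.

Section Retraction.
Context {X : CBanach} (Y : X -> Prop) (e : X).

(* x in B_{Y+Ce} is sent to base x / (1 + |coef x| ||e||), a point of B_Y at
   distance at most 2 |coef x| ||e|| from x. *)
Definition shrink (x : X) : R := / (1 + Cmod (coef Y e x) * vnorm e).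
Definition retract (x : X) : X := vscal (mkC (shrink x) 0) (base Y e x).

Lemma shrink_spec (x : X) :
  0 < shrink x /\ shrink x <= 1 /\ shrink x * (1 + Cmod (coef Y e x) * vnorm e) = 1.
Proof.
  unfold shrink. pose proof (Cmod_ge0 (coef Y e x)). pose proof (vnorm_ge0 e).
  assert (0 <= Cmod (coef Y e x) * vnorm e) by nra.
  split; [|split].
  - apply Rinv_0_lt_compat; lra.
  - rewrite <- Rinv_1. apply Rinv_le_contravar; lra.
  - field; lra.
Qed.

Lemma retract_in_Y (x : X) : is_subspace Y -> ext_line Y e x -> Y (retract x).
Proof. intros (_ & _ & Hs) Hx. apply Hs, decomp_spec, Hx. Qed.

Lemma retract_ball (x : X) : ext_line Y e x -> ball1 x -> ball1 (retract x).
Proof.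
  unfold ball1, retract. intros Hx Hb.
  rewrite vnorm_scal, Cmod_real. destruct (shrink_spec x) as (S0 & S1 & S2).
  rewrite Rabs_pos_eq by lra.
  pose proof (base_bound Y e x Hx). pose proof (vnorm_ge0 (base Y e x)). nra.
Qed.

Lemma retract_close (x : X) : ext_line Y e x -> ball1 x ->
  vnorm (vsub (retract x) x) <= 2 * (Cmod (coef Y e x) * vnorm e).
Proof.
  unfold ball1, retract. intros Hx Hb.
  destruct (decomp_spec Y e x Hx) as [_ Ex]. destruct (shrink_spec x) as (S0 & S1 & S2).
  set (b := base Y e x) in *. set (s := shrink x) in *.
  assert (E : vsub (vscal (mkC s 0) b) x = vsub (vscal (mkC (s - 1) 0) b) (vscal (coef Y e x) e)).
  { replace (mkC s 0) with (Cadd (mkC (s - 1) 0) Defs.C1)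
      by (apply Ceq; unfold Defs.C1; simpl; ring).
    rewrite vscal_distr_c, vscal_1, Ex at 1. rewrite (vadd_comm b), vsub_add.
    rewrite vsub_diag, vadd_0. reflexivity. }
  rewrite E. eapply Rle_trans; [apply vnorm_sub_le|].
  rewrite !vnorm_scal, Cmod_real.
  rewrite Rabs_left1 by lra.
  set (t := Cmod (coef Y e x) * vnorm e) in *.
  pose proof (base_bound Y e x Hx) as Hbb. fold b t in Hbb.
  assert ((1 - s) * vnorm b <= (1 - s) * (1 + t)) by (apply Rmult_le_compat_l; lra).
  replace ((1 - s) * (1 + t)) with t in * by (rewrite Rmult_minus_distr_r, S2; ring).
  lra.
Qed.

Lemma retract_functional (phi : X -> Cplx) (x : X) : dual_functional Y phi -> ext_line Y e x ->
  Cmod (phi (retract x)) <= Cmod (phi (base Y e x)).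
Proof.
  intros (_ & Ps & _) Hx. unfold retract.
  rewrite Ps by (apply decomp_spec, Hx). rewrite Cmod_mul, Cmod_real.
  destruct (shrink_spec x) as (S0 & S1 & _). rewrite Rabs_pos_eq by lra.
  pose proof (Cmod_ge0 (phi (base Y e x))). nra.
Qed.

End Retraction.

(* If e is separated from Y, then Cl_{B_{Y+Ce}}(f,0) is contained in
   Cl_{B_Y}(f,0): a weakly null net z_i of B_{Y+Ce} is replaced by the net
   retract z_i of B_Y, which is weakly null in Y and uniformly close to z_i. *)
Lemma cluster_ext_line {X : CBanach} (Y : X -> Prop) (e : X) (d : R) (f : X -> Cplx) :
  is_subspace Y -> d > 0 -> separated Y e d -> unif_cont_on_ball f ->
  forall lam, cluster_set0 (ext_line Y e) f lam -> cluster_set0 Y f lam.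
Proof.
  intros HY Hd Hsep Huc lam (I & le & z & Hdir & Hz & Hw & Hl).
  exists I, le, (fun i => retract Y e (z i)). split; [exact Hdir|]. split; [|split].
  - intro i. destruct (Hz i) as [HzW Hzb].
    split; [apply retract_in_Y | apply retract_ball]; assumption.
  - intros phi Hphi. apply (net_lim_C0_dominated le (fun i => phi (base Y e (z i)))).
    + exact (Hw _ (base_dual Y e d HY Hd Hsep phi Hphi)).
    + intro i. apply retract_functional; [exact Hphi | apply Hz].
  - apply (net_lim_C_perturb le (fun i => f (z i))); [exact Hdir | exact Hl |].
    (* the coordinates of z_i along e tend to 0 *)
    intros eps Heps. destruct (Huc eps Heps) as (delta & Hdel & Hu).
    pose proof (vnorm_ge0 e).
    destruct (Hw _ (coef_dual Y e d HY Hd Hsep) (delta / (2 * (vnorm e + 1)))) as (i0 & Hi0).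
    { apply Rdiv_lt_0_compat; lra. }
    exists i0. intros i Hi. specialize (Hi0 i Hi). rewrite Csub_C0 in *.
    destruct (Hz i) as [HzW Hzb].
    apply Hu; [apply retract_ball; assumption | exact Hzb |].
    eapply Rle_lt_trans; [apply retract_close; assumption|].
    apply Rle_lt_trans with (Cmod (coef Y e (z i)) * (2 * (vnorm e + 1))).
    { pose proof (Cmod_ge0 (coef Y e (z i))). nra. }
    replace delta with (delta / (2 * (vnorm e + 1)) * (2 * (vnorm e + 1))) by (field; lra).
    apply Rmult_lt_compat_r; lra.
Qed.

(** Closed subspaces of finite codimension *)

Lemma closed_subspace_gap {X : CBanach} (Y : X -> Prop) (e : X) :
  is_subspace Y -> is_closed Y ->
  Y e \/ exists d, d > 0 /\ forall y, Y y -> d <= vnorm (vadd e y).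
Proof.
  intros HY HYc.
  destruct (classic (exists d, d > 0 /\ forall y, Y y -> d <= vnorm (vadd e y)))
    as [H|H]; [right; exact H | left].
  (* otherwise some y_n in Y has ||e + y_n|| < 1/(n+1), and -y_n converges to e *)
  assert (Hex : forall n : nat, exists y, Y y /\ vnorm (vadd e y) < / (INR n + 1)).
  { intro n. apply NNPP. intro Hn. apply H. exists (/ (INR n + 1)). split.
    - apply Rinv_0_lt_compat. pose proof (pos_INR n); lra.
    - intros y Hy. apply Rnot_lt_le. intro Hl. apply Hn. exists y; auto. }
  destruct (choice _ Hex) as (ys & Hys).
  apply (HYc (fun n => vopp (ys n))); [intro n; apply subspace_opp, Hys; exact HY|].
  intros eps He. destruct (archimed_cor1 eps He) as (N & HN & HN0). exists N. intros n Hn.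
  unfold vsub. rewrite <- vopp_add, vnorm_opp, vadd_comm.
  destruct (Hys n) as [_ Hb]. eapply Rlt_le_trans; [apply Hb|].
  eapply Rle_trans; [|left; apply HN].
  apply Rinv_le_contravar; [apply lt_0_INR; lia|]. apply le_INR in Hn. lra.
Qed.

Lemma gap_separated {X : CBanach} (Y : X -> Prop) (e : X) (d : R) :
  is_subspace Y -> (forall y, Y y -> d <= vnorm (vadd e y)) -> separated Y e d.
Proof.
  intros (_ & _ & Hs) Hgap y c Hy.
  destruct (classic (c = C0)) as [->|Hc].
  - rewrite Cmod_C0, Rmult_0_l. apply vnorm_ge0.
  - assert (E : vadd y (vscal c e) = vscal c (vadd e (vscal (Cinv c) y))).
    { rewrite vscal_distr_v, vscal_assoc, Cmul_inv, vscal_1 by exact Hc. apply vadd_comm. }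
    rewrite E, vnorm_scal. apply Rmult_le_compat_l; [apply Cmod_ge0|]. auto.
Qed.

Definition spans_modulo {X : CBanach} (Z : X -> Prop) (n : nat) (e : nat -> X) : Prop :=
  forall x, exists c y, Z y /\ x = vadd y (lincomb n c e).

Lemma lincomb_shift {X : CBanach} (n : nat) (c : nat -> Cplx) (e : nat -> X) (y : X) :
  vadd y (lincomb (S n) c e) = vadd (vadd y (vscal (c n) (e n))) (lincomb n c e).
Proof. simpl. rewrite <- !vadd_assoc, (vadd_comm (lincomb n c e)). reflexivity. Qed.

Lemma spans_modulo_ext {X : CBanach} (Z : X -> Prop) (n : nat) (e : nat -> X) :
  spans_modulo Z (S n) e -> spans_modulo (ext_line Z (e n)) n e.
Proof.
  intros Hspan x. destruct (Hspan x) as (c & y & Hy & ->).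
  exists c, (vadd y (vscal (c n) (e n))). split; [exists (c n), y; auto | apply lincomb_shift].
Qed.

Lemma spans_modulo_absorb {X : CBanach} (Z : X -> Prop) (n : nat) (e : nat -> X) :
  is_subspace Z -> Z (e n) -> spans_modulo Z (S n) e -> spans_modulo Z n e.
Proof.
  intros (_ & Ha & Hs) He Hspan x. destruct (Hspan x) as (c & y & Hy & ->).
  exists c, (vadd y (vscal (c n) (e n))). split; auto using lincomb_shift.
Qed.

Lemma spans_modulo_0 {X : CBanach} (Z : X -> Prop) (e : nat -> X) :
  spans_modulo Z 0 e -> forall x, Z x.
Proof. intros Hspan x. destruct (Hspan x) as (c & y & Hy & ->). simpl. rewrite vadd_0. exact Hy. Qed.

Lemma cluster_spans_modulo {X : CBanach} (e : nat -> X) (f : X -> Cplx) :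
  unif_cont_on_ball f ->
  forall n (Y : X -> Prop), is_subspace Y -> is_closed Y -> spans_modulo Y n e ->
  forall lam, cluster_set0 (fun _ => True) f lam -> cluster_set0 Y f lam.
Proof.
  intros Huc n. induction n as [|n IH]; intros Y HY HYc Hspan lam Hcl.
  - apply (cluster_set0_mono (fun _ => True)); [|exact Hcl].
    intros x _. exact (spans_modulo_0 Y e Hspan x).
  - destruct (closed_subspace_gap Y (e n) HY HYc) as [Hin | (d & Hd & Hgap)].
    + exact (IH Y HY HYc (spans_modulo_absorb Y n e HY Hin Hspan) lam Hcl).
    + pose proof (gap_separated Y (e n) d HY Hgap) as Hsep.
      apply (cluster_ext_line Y (e n) d f HY Hd Hsep Huc).
      apply IH; [apply ext_line_subspace, HY
                | exact (ext_line_closed Y (e n) d HY Hd Hsep HYc)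
                | apply spans_modulo_ext, Hspan | exact Hcl].
Qed.

Theorem proposition2p5 (X : CBanach) (Y : X -> Prop)
  (HYsub : is_subspace Y) (HYclosed : is_closed Y) (HYcodim : finite_codim Y)
  (f : X -> Cplx) (Hf : A_u f) :
  forall lam : Cplx,
    cluster_set0 (fun _ : X => True) f lam <-> cluster_set0 Y f lam.
Proof.
  intro lam. destruct Hf as (_ & _ & Huc). destruct HYcodim as (n & e & Hspan).
  split.
  - exact (cluster_spans_modulo e f Huc n Y HYsub HYclosed Hspan lam).
  - apply cluster_set0_mono. auto.
Qed.
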